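(* Let $1\le m\le n-1$, let $A\otimes B\in Y$, and let $g\in\mathrm{GL}_{m(n-m)}(\mathbb{R})$ be such that $(A\otimes B)g\in Y$. Then $g$ is an elementary tensor: $g=g_m\otimes g_{n-m}$ for some $g_m\in\mathrm{GL}_m(\mathbb{R})$ and $g_{n-m}\in\mathrm{GL}_{n-m}(\mathbb{R})$.
   Context: $Y=\{A\otimes B: A\in\mathrm{Mat}_{n\times m}(\mathbb{R}),B\in\mathrm{Mat}_{n\times(n-m)}(\mathbb{R})$ of full rank, column space of $A$ orthogonal to column space of $B\}$, where $A\otimes B=(a_{ij}B)_{i,j}$ denotes the Kronecker product (an $n^2\times m(n-m)$ matrix); similarly $g_m\otimes g_{n-m}$ is the Kronecker product. *)

From mathcomp Require Import all_boot all_algebra.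
From mathcomp Require Import reals.
From mathcomp.real_closed Require Export mxtens.
Set Implicit Arguments. Unset Strict Implicit. Unset Printing Implicit Defensive.
Import GRing.Theory Num.Theory.
Local Open Scope ring_scope.

(* Kronecker product: (A *t B) = (a_ij B)_{ij}, from real_closed/mxtens
   (row index (i,k) ↦ i * p + k, column index (j,l) ↦ j * q + l). *)

Definition inY (R : realType) (n m : nat) (M : 'M[R]_(n * n, m * (n - m))) : Prop :=
  exists (A : 'M[R]_(n, m)) (B : 'M[R]_(n, n - m)),
    [/\ \rank A = m, \rank B = (n - m)%N, A^T *m B = 0 & M = A *t B].

From mathcomp Require Import all_boot all_algebra.
From mathcomp Require Import reals.
From mathcomp Require Import zify.
Import GRing.Theory Num.Theory.
Local Open Scope ring_scope.

(* Write (A ⊗ B) g = A' ⊗ B' with A' ⊗ B' ∈ Y.  Since B^T A = 0,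
   multiplying on the left by B^T ⊗ 1 gives (B^T A') ⊗ B' = 0, and B' ≠ 0
   forces B^T A' = 0; symmetrically A^T B' = 0.  As rank A + rank B = n and
   A^T B = 0, the column space of A is the whole orthogonal complement of
   that of B (and vice versa), so A' = A X and B' = B Y.  Hence
   (A ⊗ B) g = (A ⊗ B)(X ⊗ Y), and A ⊗ B is left-cancellable because A and B
   have full column rank, so g = X ⊗ Y.  Finally X and Y are invertible
   because A' = A X and B' = B Y have full column rank. *)

Section KroneckerFacts.
Context {F : fieldType}.

Lemma tensmx11 p q : (1%:M : 'M[F]_p) *t (1%:M : 'M[F]_q) = 1%:M.
Proof.
apply/matrixP=> i j.
case: (mxtens_indexP i)=> [a b]; case: (mxtens_indexP j)=> [c d].
rewrite tensmxE !mxE (can_eq (@mxtens_indexK _ _)) xpair_eqE.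
by case: (a == c); case: (b == d); rewrite ?mulr1 ?mulr0 ?mul0r.
Qed.

(* A Kronecker product vanishes only if one of its factors does: the entry
   of X ⊗ Y at a pair of indices is a product of an entry of X and one of Y. *)
Lemma tensmx_eq0 m n p q (X : 'M[F]_(m, n)) (Y : 'M[F]_(p, q)) :
  (X *t Y == 0) = (X == 0) || (Y == 0).
Proof.
apply/idP/idP; last first.
  by case/orP=> /eqP->; rewrite ?tens0mx ?tensmx0.
move/eqP=> XY0; apply/norP=> -[/eqP nzX nzY]; apply: nzX.
apply/matrixP=> i j; have /matrix0Pn[k [l nzYkl]] := nzY.
have := congr1 (fun M : 'M_(m * p, n * q) =>
  M (mxtens_index (i, k)) (mxtens_index (j, l))) XY0.
by rewrite /= tensmxE !mxE => /eqP; rewrite mulf_eq0 (negbTE nzYkl) orbF => /eqP.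
Qed.

(* Left multiplication by A ⊗ B is injective when A and B have full column
   rank: pinvmx A ⊗ pinvmx B is then a left inverse. *)
Lemma tensmx_lcancel {m n p q r} (A : 'M[F]_(m, n)) (B : 'M[F]_(p, q))
    (g h : 'M[F]_(n * q, r)) :
  row_full A -> row_full B -> (A *t B) *m g = (A *t B) *m h -> g = h.
Proof.
move=> fullA fullB /(congr1 (mulmx (pinvmx A *t pinvmx B))).
by rewrite !mulmxA tensmx_mul !mulVpmx // tensmx11 !mul1mx.
Qed.

Lemma tens_annihilator_l {m n p q k r s} {C : 'M[F]_(k, m)}
    {A : 'M[F]_(m, n)} {B : 'M[F]_(p, q)} {g : 'M[F]_(n * q, r * s)}
    {A' : 'M[F]_(m, r)} {B' : 'M[F]_(p, s)} :
  C *m A = 0 -> (A *t B) *m g = A' *t B' -> B' != 0 -> C *m A' = 0.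
Proof.
move=> CA0 E nzB'; apply/eqP; move: (congr1 (mulmx (C *t 1%:M)) E).
rewrite mulmxA !tensmx_mul CA0 tens0mx mul0mx mul1mx => /esym/eqP.
by rewrite tensmx_eq0 (negbTE nzB') orbF.
Qed.

Lemma tens_annihilator_r {m n p q k r s} {C : 'M[F]_(k, p)}
    {A : 'M[F]_(m, n)} {B : 'M[F]_(p, q)} {g : 'M[F]_(n * q, r * s)}
    {A' : 'M[F]_(m, r)} {B' : 'M[F]_(p, s)} :
  C *m B = 0 -> (A *t B) *m g = A' *t B' -> A' != 0 -> C *m B' = 0.
Proof.
move=> CB0 E nzA'; apply/eqP; move: (congr1 (mulmx (1%:M *t C)) E).
rewrite mulmxA !tensmx_mul CB0 tensmx0 mul0mx mul1mx => /esym/eqP.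
by rewrite tensmx_eq0 (negbTE nzA').
Qed.

End KroneckerFacts.

Section OrthogonalComplement.
Context {F : fieldType}.

Lemma orthogonal_complement_factor {n p q k} {C : 'M[F]_(n, p)}
    {B : 'M[F]_(n, q)} {D : 'M[F]_(n, k)} :
  (\rank C + \rank B)%N = n -> C^T *m B = 0 -> B^T *m D = 0 ->
  exists X, D = C *m X.
Proof.
move=> rank_sum CB0 BD0.
have C_ker : (C^T <= kermx B)%MS by apply/sub_kermxP.
have D_ker : (D^T <= kermx B)%MS.
  by apply/sub_kermxP; rewrite -(trmxK B) -trmx_mul BD0 trmx0.
have ker_C : (kermx B <= C^T)%MS.
  by rewrite -(mxrank_leqif_sup C_ker).2 mxrank_ker mxrank_tr; apply/eqP; lia.
have /submxP[X' DX'] := submx_trans D_ker ker_C.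
by exists X'^T; rewrite -(trmxK D) DX' trmx_mul trmxK.
Qed.

Lemma unitmx_of_full_product {n k} (C : 'M[F]_(n, k)) (X : 'M[F]_k) :
  \rank (C *m X) = k -> X \in unitmx.
Proof.
move=> rankCX; rewrite -row_full_unit /row_full eqn_leq rank_leq_col /=.
by rewrite -{1}rankCX mxrankM_maxr.
Qed.

End OrthogonalComplement.

Theorem mainTheorem10 (R : realType) (n m : nat) (hm1 : (1 <= m)%N) (hm2 : (m <= n - 1)%N)
  (A : 'M[R]_(n, m)) (B : 'M[R]_(n, n - m))
  (hA : \rank A = m) (hB : \rank B = (n - m)%N) (hAB : A^T *m B = 0)
  (g : 'M[R]_(m * (n - m))) (hg : g \in unitmx)
  (hY : inY (A *t B *m g)) :
  exists (gm : 'M[R]_m) (gnm : 'M[R]_(n - m)),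
    [/\ gm \in unitmx, gnm \in unitmx & g = gm *t gnm].
Proof.
case: hY => A' [B'] [rankA' rankB' _ E].
have rank_sum : (\rank A + \rank B)%N = n by rewrite hA hB; lia.
have nzA' : A' != 0 by rewrite -mxrank_eq0 rankA'; lia.
have nzB' : B' != 0 by rewrite -mxrank_eq0 rankB'; lia.
have hBA : B^T *m A = 0 by rewrite -(trmxK A) -trmx_mul hAB trmx0.
have [X defA'] := orthogonal_complement_factor rank_sum hAB
  (tens_annihilator_l hBA E nzB').
have rank_sum' : (\rank B + \rank A)%N = n by rewrite addnC.
have [Y defB'] := orthogonal_complement_factor rank_sum' hBA
  (tens_annihilator_r hAB E nzA').
have defg : g = X *t Y.
  apply: (tensmx_lcancel A B); rewrite ?/row_full ?hA ?hB //.
  by rewrite E defA' defB' tensmx_mul.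
exists X, Y; split=> //.
- by apply: (unitmx_of_full_product A); rewrite -defA'.
- by apply: (unitmx_of_full_product B); rewrite -defB'.
Qed.
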